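(* Let $d\ge2$ be an integer, $a\in\mathbb C$, and $p(t)=a\Bigl((d-1)-\sum_{i=1}^d2t^i\Bigr)$. Suppose $a(d+1)$ is a root of unity and let $k$ be the smallest positive integer with $(a(d+1))^k=1$. Then $V_p$ has order $\operatorname{lcm}(k,d+1)$ if $d$ is odd, and $\operatorname{lcm}(k,2(d+1))$ if $d$ is even.
   Context: For $p(t)=a_0+a_1t+\cdots+a_dt^d$, $V_p$ is the $(d+1)\times(d+1)$ matrix whose $(i,j)$ entry ($0\le i,j\le d$) is $a_{(i-j-1)\bmod (d+1)}$. The order of an invertible matrix $M$ is the smallest $m\ge1$ with $M^m=I$. *)

From mathcomp Require Import all_boot all_order all_algebra.
From mathcomp Require Import complex.
Set Implicit Arguments. Unset Strict Implicit. Unset Printing Implicit Defensive.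
Import GRing.Theory Num.Theory.
Local Open Scope ring_scope.

(* V_p for p = a_0 + a_1 t + ... + a_d t^d : the (d+1)x(d+1) matrix whose
   (i,j) entry (0 <= i,j <= d) is a_{(i-j-1) mod (d+1)}.
   Since 0 <= i,j <= d, (i - j - 1) mod (d+1) = (i + d - j) %% (d+1) in nat. *)
Definition Vmat (R : nzRingType) (d : nat) (p : {poly R}) : 'M[R]_(d.+1) :=
  \matrix_(i < d.+1, j < d.+1) p`_((i + d - j) %% d.+1)%N.

Definition mx_order (R : nzRingType) (n : nat) (M : 'M[R]_(n.+1)) (m : nat) : Prop :=
  (0 < m)%N /\ M ^+ m = 1 /\ forall m', (0 < m')%N -> M ^+ m' = 1 -> (m <= m')%N.

Definition pcor (R : nzRingType) (d : nat) (a : R) : {poly R} :=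
  a *: ((d.-1)%:R%:P - \sum_(1 <= i < d.+1) 2%:R *: 'X^i).

From mathcomp Require Import all_boot all_order all_algebra zify ring.
From mathcomp Require Import complex.
Import GRing.Theory Num.Theory.
Local Open Scope ring_scope.

(* Let b = a (d+1), S the cyclic shift and P = J/(d+1) the projection onto the
   constant vectors.  Then V_p = b S (I - 2P), where the reflection I - 2P is an
   involution commuting with S, so V_p^m = b^m S^m (I - 2P)^(m mod 2).  For
   d >= 2 the scaled permutation matrix b^m S^m cannot equal I - 2P, whose
   off-diagonal entries are all nonzero; hence V_p^m = I iff m is even,
   (d+1) | m and b^m = 1, i.e. iff lcm(k, 2, d+1) | m. *)

Section Shift.
Variables (R : nzRingType) (n : nat).

Definition shift_mx (c : 'I_n.+1) : 'M[R]_n.+1 := \matrix_(i, j) (i == j + c)%:R.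

Lemma shift_mx0 : shift_mx 0 = 1.
Proof. by apply/matrixP => i j; rewrite !mxE addr0. Qed.

Lemma shift_mxD (c c' : 'I_n.+1) : shift_mx c * shift_mx c' = shift_mx (c + c').
Proof.
apply/matrixP => i j; rewrite !mxE (bigD1 (j + c')) //= !mxE eqxx mulr1.
rewrite big1 ?addr0 ?[c + c']addrC ?addrA // => k /negbTE k_neq.
by rewrite !mxE k_neq mulr0.
Qed.

Lemma shift_mxMn (c : 'I_n.+1) m : shift_mx c ^+ m = shift_mx (c *+ m).
Proof.
elim: m => [|m IHm]; first by rewrite expr0 mulr0n shift_mx0.
by rewrite exprSr IHm shift_mxD mulrSr.
Qed.

Lemma shift_mx_const (c : 'I_n.+1) : shift_mx c * const_mx 1 = const_mx 1.
Proof.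
apply/matrixP => i j; rewrite !mxE (bigD1 (i - c)) //= !mxE subrK eqxx mulr1.
rewrite big1 ?addr0 // => k k_neq.
by rewrite !mxE -subr_eq eq_sym (negbTE k_neq) mul0r.
Qed.

Lemma const_shift_mx (c : 'I_n.+1) : const_mx 1 * shift_mx c = const_mx 1.
Proof.
apply/matrixP => i j; rewrite !mxE (bigD1 (j + c)) //= !mxE eqxx mulr1.
rewrite big1 ?addr0 // => k /negbTE k_neq.
by rewrite !mxE k_neq mulr0.
Qed.

Lemma scale_shift_add_const_eq1 (x y : R) (c : 'I_n.+1) : (1 < n)%N ->
  x *: shift_mx c + y *: const_mx 1 = 1 -> [/\ x = 1, y = 0 & c = 0].
Proof.
move=> n_gt1 /matrixP eq1.
have entry i j : x * (i == j + c)%:R + y = (i == j)%:R.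
  by have := eq1 i j; rewrite !mxE mulr1.
have [i [i_neq0 i_neqc]] : exists i : 'I_n.+1, i != 0 /\ i != c.
  pose i1 : 'I_n.+1 := inord 1; pose i2 : 'I_n.+1 := inord 2.
  have i1E : i1 = 1%N :> nat by rewrite inordK //; lia.
  have i2E : i2 = 2%N :> nat by rewrite inordK //; lia.
  have [i1c | i1c] := eqVneq i1 c.
    by exists i2; rewrite -i1c; split; apply/eqP => /(congr1 val); rewrite /= i2E ?i1E.
  by exists i1; split=> //; apply/eqP => /(congr1 val); rewrite /= i1E.
have y0 : y = 0.
  by have := entry i 0; rewrite add0r (negbTE i_neq0) (negbTE i_neqc) mulr0 add0r.
have := entry c 0; have := entry 0 0.
rewrite y0 !addr0 add0r eqxx [0 == c]eq_sym eqxx mulr1.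
have [-> | _] := eqVneq c 0; first by rewrite mulr1.
by rewrite mulr0 => /esym/eqP; rewrite oner_eq0.
Qed.

Lemma const_mx1_sqr : const_mx 1 * const_mx 1 = n.+1%:R *: (const_mx 1 : 'M[R]_n.+1).
Proof.
apply/matrixP => i j; rewrite !mxE.
under eq_bigr => k _ do rewrite !mxE mul1r.
by rewrite sumr_const card_ord mulr1.
Qed.

Lemma Zp1_mulrn_eq0 m : (Zp1 *+ m == 0 :> 'I_n.+1) = (n.+1 %| m)%N.
Proof. by rewrite Zp_mulrn -(inj_eq val_inj) /= modnMml mul1n. Qed.

End Shift.

Arguments shift_mx {R n}.

Section Reflection.
Variables (F : numFieldType) (n : nat).

Definition ones_proj_mx : 'M[F]_n.+1 := n.+1%:R^-1 *: const_mx 1.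
Definition ones_refl_mx : 'M[F]_n.+1 := 1 - ones_proj_mx *+ 2.

Lemma ones_proj_mx_idem : ones_proj_mx * ones_proj_mx = ones_proj_mx.
Proof.
rewrite /ones_proj_mx -scalerAl -scalerAr const_mx1_sqr !scalerA.
by rewrite mulrAC mulVf ?mul1r // pnatr_eq0.
Qed.

Lemma shift_ones_proj (c : 'I_n.+1) : shift_mx c * ones_proj_mx = ones_proj_mx.
Proof. by rewrite -scalerAr shift_mx_const. Qed.

Lemma ones_proj_shift (c : 'I_n.+1) : ones_proj_mx * shift_mx c = ones_proj_mx.
Proof. by rewrite -scalerAl const_shift_mx. Qed.

Lemma ones_refl_mx_sqr : ones_refl_mx * ones_refl_mx = 1.
Proof.
rewrite /ones_refl_mx mulrBl !mulrBr !mul1r mulr1 mulrnAl mulrnAr ones_proj_mx_idem.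
by rewrite [_ *+ 2 *+ 2]mulr2n opprB addrK subrK.
Qed.

Lemma expr_ones_refl m : ones_refl_mx ^+ m = if odd m then ones_refl_mx else 1.
Proof.
rewrite -{1}[m]odd_double_half exprD -mul2n exprM expr2 ones_refl_mx_sqr.
by rewrite expr1n mulr1; case: odd.
Qed.

Lemma shift_mx_ones_refl (c : 'I_n.+1) :
  shift_mx c * ones_refl_mx = shift_mx c - ones_proj_mx *+ 2.
Proof. by rewrite mulrBr mulr1 mulrnAr shift_ones_proj. Qed.

Lemma shift_ones_refl_comm (c : 'I_n.+1) :
  GRing.comm (shift_mx c) ones_refl_mx.
Proof.
rewrite /GRing.comm shift_mx_ones_refl /ones_refl_mx mulrBl mul1r.
by rewrite mulrnAl ones_proj_shift.
Qed.

Lemma scale_shift_refl_expr_eq1 (b : F) (c : 'I_n.+1) m : (1 < n)%N ->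
  (b *: (shift_mx c * ones_refl_mx)) ^+ m = 1 <->
  [/\ ~~ odd m, b ^+ m = 1 & c *+ m = 0].
Proof.
move=> n_gt1.
rewrite exprZn exprMn_comm; last exact: shift_ones_refl_comm.
rewrite shift_mxMn expr_ones_refl.
case: (odd m); rewrite ?mulr1; last first.
  split=> [| [_ -> ->]]; last by rewrite scale1r shift_mx0.
  rewrite -[_ *: _]addr0 -(scale0r (const_mx 1)).
  by case/scale_shift_add_const_eq1.
split=> [eqR | []//]; have /scale_shift_add_const_eq1[// | _ two_over_n _] :
    b ^+ m *: shift_mx (c *+ m) + (n.+1%:R^-1 *+ 2) *: const_mx 1 = 1.
  move/(congr1 (fun M => M * ones_refl_mx)): eqR.
  rewrite -scalerAl -mulrA ones_refl_mx_sqr mulr1 mul1r => ->.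
  by rewrite -scalerMnl subrK.
by move/eqP: two_over_n; rewrite mulrn_eq0 invr_eq0 pnatr_eq0.
Qed.

End Reflection.

Lemma coef_pcor (C : comNzRingType) d (a : C) t : (t < d.+1)%N ->
  (pcor d a)`_t = if t == 0%N then a * d.-1%:R else - (2%:R * a).
Proof.
move=> t_le; rewrite /pcor coefZ coefB coefC coef_sum.
have -> : \sum_(1 <= l < d.+1) (2%:R *: 'X^l : {poly C})`_t =
          \sum_(1 <= l < d.+1 | l == t) (2%:R : C).
  rewrite [RHS]big_mkcond; apply: eq_bigr => l _.
  by rewrite coefZ coefXn eq_sym; case: eqP; rewrite ?mulr1 ?mulr0.
rewrite big_nat1_eq; case: t t_le => [|t] t_le /=; first by rewrite subr0.
by rewrite t_le sub0r mulrN mulrC.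
Qed.

Lemma Vmat_shift_index d (i j : 'I_d.+1) :
  ((i + d - j) %% d.+1 == 0)%N = (i == j + Zp1).
Proof.
rewrite -(inj_eq val_inj) /= modnDmr.
have j_le : (j <= i + d)%N by rewrite (leq_trans _ (leq_addl i d)) // -ltnS.
rewrite -/(dvdn _ _) -eqn_mod_dvd // -(eqn_modDr 1) -addnA !addn1.
by rewrite modnDr (modn_small (ltn_ord i)).
Qed.

Lemma Vmat_pcor (F : numFieldType) d (a : F) : (0 < d)%N ->
  Vmat d (pcor d a) = (a * d.+1%:R) *: (shift_mx Zp1 * ones_refl_mx F d).
Proof.
move=> d_gt0; rewrite shift_mx_ones_refl.
apply/matrixP => i j; rewrite !mxE coef_pcor ?ltn_pmod // Vmat_shift_index.
have n_pred : d.+1%:R = d.-1%:R + 2%:R :> F by rewrite -natrD addn2 prednK.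
by case: (_ == _); rewrite /= n_pred; field; rewrite -n_pred pnatr_eq0.
Qed.

Lemma mx_order_dvd (R : nzRingType) n (M : 'M[R]_n.+1) L :
  (0 < L)%N -> (forall m, M ^+ m = 1 <-> (L %| m)%N) -> mx_order M L.
Proof.
move=> L_gt0 M_eq1; split=> //; split; first exact/M_eq1.
by move=> m m_gt0 /M_eq1; apply: dvdn_leq.
Qed.

Lemma lcm2n n : (lcmn 2 n = if odd n then 2 * n else n)%N.
Proof.
case: ifP => [odd_n | even_n]; last by apply/lcmn_idPr; rewrite dvdn2 even_n.
have co2n : coprime 2 n by rewrite coprime2n odd_n.
by rewrite -muln_lcm_gcd (eqP co2n) muln1.
Qed.

Local Open Scope complex_scope.

Theorem corollary17 (R : rcfType) (d : nat) (a : R[i]) (k : nat) :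
  (2 <= d)%N ->
  k.-primitive_root (a * (d.+1)%:R) ->
  mx_order (Vmat d (pcor d a))
    (if odd d then lcmn k d.+1 else lcmn k (2 * d.+1)).
Proof.
move=> d_ge2 prim_b.
have -> : (if odd d then lcmn k d.+1 else lcmn k (2 * d.+1)) =
          lcmn k (lcmn 2 d.+1) by rewrite lcm2n /=; case: odd.
apply: mx_order_dvd; first by rewrite !lcmn_gt0 (prim_order_gt0 prim_b).
move=> m; rewrite Vmat_pcor ?(ltnW d_ge2) //.
apply: iff_trans (scale_shift_refl_expr_eq1 _ _ _ _ m d_ge2) _.
rewrite !dvdn_lcm (prim_order_dvd prim_b) dvdn2 -Zp1_mulrn_eq0.
by split=> [[-> -> ->] | /and3P[/eqP-> -> /eqP->]]; rewrite ?eqxx.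
Qed.
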